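(* Let $\varphi:\mathbb R^n\times\mathbb R^m\to\mathbb R\cup\{\pm\infty\}$ with $\mathrm{dom}\,\varphi=\{(x,y):-\infty<\varphi(x,y)<\infty\}$, $\mathcal D_x=\{x:\exists y,(x,y)\in\mathrm{dom}\,\varphi\}$, $\mathcal D_y=\{y:\exists x,(x,y)\in\mathrm{dom}\,\varphi\}$. Suppose (i) for every $y\in\mathcal D_y$, $\varphi(\cdot,y)$ is proper, closed, $\zeta_x$-weakly convex and $\mu_x$-PL (uniformly in $y$); (ii) for every $x\in\mathcal D_x$, $-\varphi(x,\cdot)$ is proper, closed, $\zeta_y$-weakly convex and $\mu_y$-PL (uniformly in $x$). If there exists $(x^*,y^* )\in\mathrm{dom}\,\varphi$ with $0\in\partial_x\varphi(x^*,y^* )$ (subdifferential of $\varphi(\cdot,y^* )$ at $x^*$) and $0\in\partial_y(-\varphi)(x^*,y^* )$ (subdifferential of $-\varphi(x^*,\cdot)$ at $y^*$), then $(x^*,y^* )$ is a saddle point: $\varphi(x^*,y)\le\varphi(x^*,y^* )\le\varphi(x,y^* )$ for all $(x,y)\in\mathbb R^n\times\mathbb R^m$; hence $\min_x\max_y\varphi(x,y)=\max_y\min_x\varphi(x,y)$.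
   Context: $\partial$ denotes the Fréchet subdifferential: $\partial g(x)=\{s:\liminf_{u\to x}\frac{g(u)-g(x)-\langle s,u-x\rangle}{\|u-x\|}\ge0\}$. A function $g$ is $\zeta$-weakly convex if $g+\frac\zeta2\|\cdot\|^2$ is convex. A proper, closed, $\zeta$-weakly convex $g:\mathbb R^n\to\mathbb R\cup\{+\infty\}$ with $S=\arg\min g\ne\emptyset$ and $g^*=\min g$ is $\mu$-PL ($\mu>0$) if $2\mu(g(x)-g^* )\le\mathrm{dist}^2(0,\partial g(x))$ for all $x\in\mathrm{dom}\,g$. *)

From HB Require Import structures.
From mathcomp Require Import all_boot all_order all_algebra.
From mathcomp Require Import all_classical all_reals ereal.
Set Implicit Arguments. Unset Strict Implicit. Unset Printing Implicit Defensive.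
Import Order.TTheory GRing.Theory Num.Theory.
Local Open Scope ring_scope.
Local Open Scope classical_set_scope.
Local Open Scope ereal_scope.

Section Defs.
Variable R : realType.

Definition dotv (n : nat) (u v : 'rV[R]_n) : R := (\sum_(i < n) u ord0 i * v ord0 i)%R.
Definition enorm (n : nat) (v : 'rV[R]_n) : R := Num.sqrt (dotv v v).

(* Fréchet subdifferential, with liminf_{u->x} (g u - g x - <s,u-x>)/|u-x| >= 0
   unfolded in epsilon-delta form; defined only at points of dom g. *)
Definition frechet_subdiff (n : nat) (g : 'rV[R]_n -> \bar R) (x s : 'rV[R]_n) : Prop :=
  g x \is a fin_num /\
  forall eps : R, (0 < eps)%R -> exists2 delta : R, (0 < delta)%R &
    forall u : 'rV[R]_n, (0 < enorm (u - x)%R)%R -> (enorm (u - x)%R < delta)%R ->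
      g x + (dotv s (u - x) - eps * enorm (u - x))%R%:E <= g u.

Definition proper_fun (n : nat) (g : 'rV[R]_n -> \bar R) : Prop :=
  (forall x, g x != -oo) /\ (exists x, g x \is a fin_num).

Definition closed_fun (n : nat) (g : 'rV[R]_n -> \bar R) : Prop :=
  forall x (a : R), a%:E < g x -> exists2 delta : R, (0 < delta)%R &
    forall u, (enorm (u - x)%R < delta)%R -> a%:E < g u.

(* convexity of an extended-real valued function (proper case, values in R u {+oo}) *)
Definition convex_fun (n : nat) (h : 'rV[R]_n -> \bar R) : Prop :=
  forall x y : 'rV[R]_n, forall t : R, (0 < t)%R -> (t < 1)%R ->
    h (t *: x + (1 - t) *: y)%R <= t%:E * h x + (1 - t)%R%:E * h y.

Definition weakly_convex (n : nat) (zeta : R) (g : 'rV[R]_n -> \bar R) : Prop :=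
  convex_fun (fun x => g x + (zeta / 2 * enorm x ^+ 2)%R%:E).

(* mu-PL: argmin nonempty, and 2 mu (g x - g_star) <= dist^2(0, dg(x)) on dom g,
   where dist^2(0, A) = inf_{s in A} |s|^2 (= +oo if A is empty). *)
Definition PL (n : nat) (mu : R) (g : 'rV[R]_n -> \bar R) : Prop :=
  exists2 xmin : 'rV[R]_n, (forall x, g xmin <= g x) &
    forall x, g x \is a fin_num ->
      ((2 * mu)%R%:E * (g x - g xmin)
        <= ereal_inf [set (enorm s ^+ 2)%R%:E | s in frechet_subdiff g x])%E.

End Defs.

From HB Require Import structures.
From mathcomp Require Import all_boot all_order all_algebra.
From mathcomp Require Import all_classical all_reals ereal.
Import Order.TTheory GRing.Theory Num.Theory.
Local Open Scope ring_scope.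
Local Open Scope classical_set_scope.
Local Open Scope ereal_scope.

(* At a stationary point x of a mu-PL function g, 0 is a subgradient, so
   dist^2(0, dg(x)) = 0 and the PL inequality gives 2 mu (g x - min g) <= 0,
   i.e. x is a global minimizer.  Applied to phi(., y* ) and -phi(x*, .) this
   yields the saddle inequalities.  A saddle point closes the weak-duality gap sup inf <= inf sup. *)

Lemma enorm0 (R : realType) (n : nat) : enorm (0 : 'rV[R]_n) = 0%R.
Proof. by rewrite /enorm /dotv big1 ?sqrtr0 // => i _; rewrite mxE mulr0. Qed.

Lemma PL_stationary_min {R : realType} {n : nat} {mu : R}
    {g : 'rV[R]_n -> \bar R} {x : 'rV[R]_n} :
  (0 < mu)%R -> PL mu g -> frechet_subdiff g x 0 -> forall u, g x <= g u.
Proof.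
move=> mu_gt0 [xmin xmin_min gPL] x_stat u.
have dist0 : ereal_inf [set (enorm s ^+ 2)%:E | s in frechet_subdiff g x] <= 0.
  by apply: ereal_inf_lbound; exists 0%R => //; rewrite enorm0 expr0n.
have := le_trans (gPL x x_stat.1) dist0.
rewrite pmule_rle0 ?lte_fin ?mulr_gt0 // sube_le0 => gx_le.
exact: le_trans gx_le (xmin_min u).
Qed.

Lemma ereal_sup_inf_le_inf_sup {R : realType} {X Y : Type}
    (phi : X -> Y -> \bar R) :
  ereal_sup [set ereal_inf [set phi x y | x in setT] | y in setT]
    <= ereal_inf [set ereal_sup [set phi x y | y in setT] | x in setT].
Proof.
apply/ereal_supP => _ [y _ <-]; apply/ereal_infP => _ [x _ <-].
apply: (@le_trans _ _ (phi x y)).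
  by apply: ereal_inf_lbound; exists x.
by apply: ereal_sup_ubound; exists y.
Qed.

Lemma saddle_inf_sup_le_sup_inf {R : realType} {X Y : Type}
    {phi : X -> Y -> \bar R} {xs : X} {ys : Y} :
  (forall y, phi xs y <= phi xs ys) -> (forall x, phi xs ys <= phi x ys) ->
  ereal_inf [set ereal_sup [set phi x y | y in setT] | x in setT]
    <= ereal_sup [set ereal_inf [set phi x y | x in setT] | y in setT].
Proof.
move=> ys_max xs_min; apply: (@le_trans _ _ (phi xs ys)).
- apply: (@le_trans _ _ (ereal_sup [set phi xs y | y in setT])).
    by apply: ereal_inf_lbound; exists xs.
  by apply/ereal_supP => _ [y _ <-].
- apply: (@le_trans _ _ (ereal_inf [set phi x ys | x in setT])).
    by apply/ereal_infP => _ [x _ <-].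
  by apply: ereal_sup_ubound; exists ys.
Qed.

Theorem lemma5 (R : realType) (n m : nat)
  (phi : 'rV[R]_n -> 'rV[R]_m -> \bar R)
  (zeta_x mu_x zeta_y mu_y : R) :
  (0 < mu_x)%R -> (0 < mu_y)%R ->
  (forall y : 'rV[R]_m, (exists x, phi x y \is a fin_num) ->
     let g := fun x => phi x y in
     [/\ proper_fun g, closed_fun g, weakly_convex zeta_x g & PL mu_x g]) ->
  (forall x : 'rV[R]_n, (exists y, phi x y \is a fin_num) ->
     let g := fun y => - phi x y in
     [/\ proper_fun g, closed_fun g, weakly_convex zeta_y g & PL mu_y g]) ->
  forall (xs : 'rV[R]_n) (ys : 'rV[R]_m),
    phi xs ys \is a fin_num ->
    frechet_subdiff (fun x => phi x ys) xs 0 ->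
    frechet_subdiff (fun y => - phi xs y) ys 0 ->
    (forall x y, phi xs y <= phi xs ys /\ phi xs ys <= phi x ys) /\
    ereal_inf [set ereal_sup [set phi x y | y in setT] | x in setT]
      = ereal_sup [set ereal_inf [set phi x y | x in setT] | y in setT].
Proof.
move=> mux_gt0 muy_gt0 hyp_x hyp_y xs ys phi_fin xs_stat ys_stat.
have [_ _ _ PLx] := hyp_x ys (ex_intro _ xs phi_fin).
have [_ _ _ PLy] := hyp_y xs (ex_intro _ ys phi_fin).
have xs_min x : phi xs ys <= phi x ys := PL_stationary_min mux_gt0 PLx xs_stat x.
have ys_max y : phi xs y <= phi xs ys.
  by rewrite -leeN2; exact: PL_stationary_min muy_gt0 PLy ys_stat y.
split=> [x y|]; first by split.
apply/eqP; rewrite eq_le (saddle_inf_sup_le_sup_inf ys_max xs_min).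
exact: ereal_sup_inf_le_inf_sup.
Qed.
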